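(* Let $X$ be an $\omega$-well-filtered coherent $d$-space. If $X\times X$ is a Fréchet space, then $X$ is sober.
   Context: For a $T_0$ space $X$, the specialization order is $x\le y$ iff $x\in\overline{\{y\}}$; a subset is saturated if it is an upper set in this order. $X$ is a $d$-space if it is $T_0$, its specialization order is a dcpo, and every open set of $X$ is Scott open with respect to the specialization order. $X$ is $\omega$-well-filtered if for every countable filtered family $\mathcal F$ of compact saturated subsets of $X$ and every open $U$, $\bigcap\mathcal F\subseteq U$ implies $F\subseteq U$ for some $F\in\mathcal F$. $X$ is coherent if the intersection of any two compact saturated subsets is compact. A space is Fréchet if whenever $x$ lies in the closure of a set $A$, some sequence in $A$ converges to $x$. A $T_0$ space is sober if every irreducible closed set equals $\overline{\{x\}}$ for some point $x$. *)

From HB Require Import structures.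
From mathcomp Require Import all_boot all_order all_algebra.
From mathcomp Require Import all_classical all_reals all_analysis.
Set Implicit Arguments. Unset Strict Implicit. Unset Printing Implicit Defensive.
Import Order.TTheory GRing.Theory Num.Theory.
Local Open Scope classical_set_scope.

Section NonHausdorff.
Context {X : topologicalType}.

Definition spec_le (x y : X) : Prop := closure [set y] x.

Definition saturated (A : set X) : Prop :=
  forall x y, A x -> spec_le x y -> A y.

Definition compact_saturated (K : set X) : Prop := compact K /\ saturated K.

Definition spec_directed (D : set X) : Prop :=
  D !=set0 /\ forall x y, D x -> D y -> exists2 z, D z & spec_le x z /\ spec_le y z.

Definition spec_sup (D : set X) (s : X) : Prop :=
  (forall d, D d -> spec_le d s) /\
  (forall u, (forall d, D d -> spec_le d u) -> spec_le s u).

Definition spec_dcpo : Prop :=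
  forall D : set X, spec_directed D -> exists s, spec_sup D s.

Definition spec_scott_open (U : set X) : Prop :=
  saturated U /\
  forall D s, spec_directed D -> spec_sup D s -> U s -> D `&` U !=set0.

Definition d_space : Prop :=
  @kolmogorov_space X /\ spec_dcpo /\
  forall U : set X, open U -> spec_scott_open U.

Definition filtered_family (F : set (set X)) : Prop :=
  F !=set0 /\ forall A B, F A -> F B -> exists2 C, F C & C `<=` A `&` B.

Definition omega_well_filtered : Prop :=
  forall F : set (set X),
    countable F -> filtered_family F -> (forall K, F K -> compact_saturated K) ->
    forall U : set X, open U -> \bigcap_(K in F) K `<=` U ->
    exists2 K, F K & K `<=` U.

Definition coherent : Prop :=
  forall K1 K2 : set X, compact_saturated K1 -> compact_saturated K2 ->
    compact (K1 `&` K2).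

Definition irreducible_closed (A : set X) : Prop :=
  closed A /\ A !=set0 /\
  forall B C : set X, closed B -> closed C -> A `<=` B `|` C -> A `<=` B \/ A `<=` C.

Definition sober : Prop :=
  @kolmogorov_space X /\
  forall A : set X, irreducible_closed A -> exists x, A = closure [set x].

End NonHausdorff.

Definition frechet_space (Y : topologicalType) : Prop :=
  forall (A : set Y) (y : Y), closure A y ->
    exists u : nat -> Y, (forall n, A (u n)) /\ u @ \oo --> y.

From mathcomp Require Import all_boot all_order all_algebra.
From mathcomp Require Import all_classical all_reals all_analysis.
Local Open Scope classical_set_scope.

(* An irreducible closed set A is directed.  For x, y in A, irreducibility puts
   (x, y) in the closure of the diagonal of A, so by the Fréchet property some
   sequence (a_n) in A converges to both x and y.  The saturations of
   {x} ∪ {a_m | m >= n} and {y} ∪ {a_m | m >= n} are compact, so by coherence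
   their intersections K_n form a decreasing sequence of compact saturated sets,
   each meeting A at a_n.  By omega-well-filteredness the intersection of the K_n
   meets the closed set A, and a point z in it lies above x and y.  In a d-space
   the supremum s of A then lies in A because A is Scott closed, and A is the
   closure of {s}. *)

Section Specialization.
Context {X : topologicalType}.

Lemma spec_le_openP (x y : X) :
  spec_le x y <-> (forall U, open U -> U x -> U y).
Proof.
split=> [xy U oU Ux | xy B].
  by have [c [/= -> //]] := xy U (open_nbhs_nbhs (conj oU Ux)).
rewrite nbhsE => -[U [oU Ux] UB].
by exists y; split => //; exact/UB/(xy U oU Ux).
Qed.

Lemma spec_le_refl (x : X) : spec_le x x.
Proof. exact: subset_closure. Qed.

Lemma open_saturated (U : set X) : open U -> saturated U.
Proof. by move=> oU x y Ux /spec_le_openP; apply. Qed.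

Lemma spec_le_trans (x y z : X) : spec_le x y -> spec_le y z -> spec_le x z.
Proof.
move=> /spec_le_openP xy /spec_le_openP yz.
by apply/spec_le_openP => U oU /(xy U oU); exact: yz.
Qed.

Lemma compact_spec_up (x : X) : compact [set y | spec_le x y].
Proof.
move=> F PF Fx; exists x; split; first exact: spec_le_refl.
move=> C B FC xB; have [y [Cy xy]] := filter_ex (filterI FC Fx).
by exists y; split => //; have [c [/= -> //]] := xy B xB.
Qed.

Lemma compact_spec_up_segment (a : nat -> X) (n M : nat) :
  compact [set b | exists2 m, (n <= m < M)%N & spec_le (a m) b].
Proof.
have -> : [set b | exists2 m, (n <= m < M)%N & spec_le (a m) b] =
    \bigcup_(m in [set` index_iota n M]) [set b | spec_le (a m) b].
  apply/seteqP; split => b [m]; last by rewrite /= mem_index_iota; exists m.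
  by move=> nm amb; exists m; rewrite /= ?mem_index_iota.
by rewrite bigcup_seq; apply: bigsetU_compact => m _; exact: compact_spec_up.
Qed.

Definition up_tail (a : nat -> X) (x : X) (n : nat) : set X :=
  [set b | spec_le x b \/ exists2 m, (n <= m)%N & spec_le (a m) b].

Lemma up_tail_self (a : nat -> X) (x : X) (n : nat) : up_tail a x n (a n).
Proof. by right; exists n => //; exact: spec_le_refl. Qed.

Lemma up_tail_decr (a : nat -> X) (x : X) (m n : nat) :
  (m <= n)%N -> up_tail a x n `<=` up_tail a x m.
Proof.
move=> mn b [xb|[k nk akb]]; [by left|right; exists k => //].
exact: leq_trans mn nk.
Qed.

Lemma up_tail_saturated (a : nat -> X) (x : X) (n : nat) :
  saturated (up_tail a x n).
Proof.
move=> b c [xb|[m nm amb]] bc; [left|right; exists m => //];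
  exact: spec_le_trans bc.
Qed.

Lemma up_tail_compact (a : nat -> X) (x : X) (n : nat) :
  a @ \oo --> x -> compact (up_tail a x n).
Proof.
move=> ax F PF Ftail.
have [Fx|] := pselect (cluster F x).
  by exists x; split => //; left; exact: spec_le_refl.
move=> /existsNP [C /existsNP [B /not_implyP [FC /not_implyP [xB CB0]]]].
move: xB; rewrite nbhsE => -[W [oW Wx] WB].
have CW b : C b -> W b -> False.
  by move=> Cb Wb; apply: CB0; exists b; split => //; exact: WB.
have [M _ aW] := ax _ (open_nbhs_nbhs (conj oW Wx)).
have Fseg : F [set b | exists2 m, (n <= m < M)%N & spec_le (a m) b].
  apply: filterS (filterI FC Ftail) => b [Cb [xb|[m nm amb]]].
    by case: (CW b Cb); exact: open_saturated oW _ _ Wx xb.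
  have [mM|Mm] := ltnP m M; first by exists m; rewrite ?nm.
  by case: (CW b Cb); exact: open_saturated oW _ _ (aW m Mm) amb.
have [p [[m /andP [nm _] amp] Fp]] := compact_spec_up_segment a n M F PF Fseg.
by exists p; split => //; right; exists m.
Qed.

Lemma up_tail_compact_saturated (a : nat -> X) (x : X) (n : nat) :
  a @ \oo --> x -> compact_saturated (up_tail a x n).
Proof.
by move=> ax; split; [exact: up_tail_compact | exact: up_tail_saturated].
Qed.

Lemma spec_le_of_up_tail (a : nat -> X) (x z : X) :
  a @ \oo --> x -> (forall n, up_tail a x n z) -> spec_le x z.
Proof.
move=> ax z_tail; apply/spec_le_openP => W oW Wx.
have [M _ aW] := ax _ (open_nbhs_nbhs (conj oW Wx)).
have [xz|[m Mm amz]] := z_tail M; first exact: open_saturated oW _ _ Wx xz.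
exact: open_saturated oW _ _ (aW m Mm) amz.
Qed.

Lemma coherent_compact_saturatedI (K1 K2 : set X) :
  coherent (X := X) -> compact_saturated K1 -> compact_saturated K2 ->
  compact_saturated (K1 `&` K2).
Proof.
move=> coh cs1 cs2; split; first exact: coh.
move=> x y [K1x K2x] xy.
by split; [exact: cs1.2 _ _ K1x xy | exact: cs2.2 _ _ K2x xy].
Qed.

Lemma omega_well_filtered_meets_closed (K : nat -> set X) (A : set X) :
  omega_well_filtered (X := X) -> (forall n, compact_saturated (K n)) ->
  (forall m n, (m <= n)%N -> K n `<=` K m) -> closed A ->
  (forall n, K n `&` A !=set0) -> exists z, A z /\ forall n, K n z.
Proof.
move=> owf csK Kdecr clA KA; apply: contrapT => noz.
have countK : countable (range K) by exact: card_image_le.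
have filtK : filtered_family (range K).
  split; first by exists (K 0%N), 0%N.
  move=> _ _ [i _ <-] [j _ <-].
  exists (K (maxn i j)); first by exists (maxn i j).
  by move=> b Kb; split; apply: Kdecr Kb; [exact: leq_maxl | exact: leq_maxr].
have csrK L : range K L -> compact_saturated L by move=> [n _ <-].
have capK : \bigcap_(L in range K) L `<=` ~` A.
  by move=> z Kz Az; apply: noz; exists z; split => // n; apply: Kz; exists n.
have [_ [n _ <-] KnA] := owf _ countK filtK csrK _ (closed_openC clA) capK.
by have [z [Knz Az]] := KA n; exact: KnA Knz Az.
Qed.

Lemma cvg2_closed_upper_bound (a : nat -> X) (A : set X) (x y : X) :
  omega_well_filtered (X := X) -> coherent (X := X) ->
  closed A -> (forall n, A (a n)) -> a @ \oo --> x -> a @ \oo --> y ->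
  exists2 z, A z & spec_le x z /\ spec_le y z.
Proof.
move=> owf coh clA Aa ax ay.
pose K n := up_tail a x n `&` up_tail a y n.
have csK n : compact_saturated (K n).
  by apply: coherent_compact_saturatedI => //; exact: up_tail_compact_saturated.
have Kdecr m n : (m <= n)%N -> K n `<=` K m.
  by move=> mn b [xb yb]; split; exact: up_tail_decr mn _ _.
have KA n : K n `&` A !=set0.
  by exists (a n); split => //; split; exact: up_tail_self.
have [z [Az Kz]] := omega_well_filtered_meets_closed _ _ owf csK Kdecr clA KA.
exists z => //; split.
- by apply: (spec_le_of_up_tail a x z ax) => n; case: (Kz n).
- by apply: (spec_le_of_up_tail a y z ay) => n; case: (Kz n).
Qed.

Lemma irreducible_closed_open_meet (A U V : set X) :
  irreducible_closed A -> open U -> open V ->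
  A `&` U !=set0 -> A `&` V !=set0 -> A `&` (U `&` V) !=set0.
Proof.
move=> [_ [_ irrA]] oU oV [x [Ax Ux]] [y [Ay Vy]]; apply: contrapT => AUV0.
have AUV : A `<=` ~` U `|` ~` V.
  move=> c Ac; have [Uc|] := pselect (U c); last by left.
  by right => Vc; apply: AUV0; exists c.
have cUV := irrA _ _ (open_closedC oU) (open_closedC oV) AUV.
by case: cUV => [/(_ x Ax)|/(_ y Ay)].
Qed.

Lemma irreducible_closed_diag_closure (A : set X) (x y : X) :
  irreducible_closed A -> A x -> A y ->
  closure [set p : X * X | A p.1 /\ p.1 = p.2] (x, y).
Proof.
move=> irrA Ax Ay N [[P Q] /= [xP yQ] PQN].
move: xP yQ; rewrite !nbhsE => -[U [oU Ux] UP] [V [oV Vy] VQ].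
have [|//|c [Ac [Uc Vc]]] := irreducible_closed_open_meet A U V irrA oU oV _ _.
- by exists x.
- by exists y.
by exists (c, c); split => //; apply: PQN; split; [exact: UP | exact: VQ].
Qed.

Lemma frechet_irreducible_closed_seq (A : set X) (x y : X) :
  frechet_space (X * X)%type -> irreducible_closed A -> A x -> A y ->
  exists a : nat -> X, [/\ forall n, A (a n), a @ \oo --> x & a @ \oo --> y].
Proof.
move=> fr irrA Ax Ay.
have [u [diag_u u_xy]] :=
  fr _ _ (irreducible_closed_diag_closure A x y irrA Ax Ay).
have fst_snd : fst \o u = snd \o u by apply/funext => n /=; have [] := diag_u n.
exists (fst \o u); split.
- by move=> n; have [] := diag_u n.
- exact: cvg_comp u_xy cvg_fst.
- by rewrite fst_snd; exact: cvg_comp u_xy cvg_snd.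
Qed.

Lemma irreducible_closed_directed (A : set X) :
  omega_well_filtered (X := X) -> coherent (X := X) ->
  frechet_space (X * X)%type -> irreducible_closed A -> spec_directed A.
Proof.
move=> owf coh fr irrA; have [clA [A0 _]] := irrA; split => // x y Ax Ay.
have [a [Aa ax ay]] := frechet_irreducible_closed_seq A x y fr irrA Ax Ay.
exact: cvg2_closed_upper_bound a A x y owf coh clA Aa ax ay.
Qed.

Lemma d_space_directed_closed_closure1 (A : set X) :
  d_space (X := X) -> closed A -> spec_directed A ->
  exists s, A = closure [set s].
Proof.
move=> [_ [dcpo scott]] clA dirA.
have [s [ub lub]] := dcpo A dirA.
have As : A s.
  apply: contrapT => nAs.
  have [_ scottA] := scott _ (closed_openC clA).
  by have [d [Ad nAd]] := scottA A s dirA (conj ub lub) nAs.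
exists s; apply/seteqP; split => [d /ub //|p sp].
by rewrite ((closure_id A).1 clA); apply: closureS sp => _ ->.
Qed.

End Specialization.

Theorem theorem3p9 (X : topologicalType) :
  omega_well_filtered (X := X) -> coherent (X := X) -> d_space (X := X) ->
  frechet_space (X * X)%type -> sober (X := X).
Proof.
move=> owf coh dX fr; split; first by case: dX.
move=> A irrA; have [clA _] := irrA.
apply: d_space_directed_closed_closure1 => //.
exact: irreducible_closed_directed.
Qed.
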